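(* Let $G$ be a sofic group and $D$ a division ring. Then the group ring $D(G)$ is stably finite, i.e. for every $n\ge1$ the matrix ring $\mathrm{Mat}_{n\times n}(D(G))$ is directly finite: whenever $a,b\in \mathrm{Mat}_{n\times n}(D(G))$ satisfy $ab=1$, then $ba=1$. *)

From HB Require Import structures.
From mathcomp Require Import all_boot all_order all_algebra all_fingroup.
From mathcomp Require Import boolp classical_sets fsbigop.
Set Implicit Arguments. Unset Strict Implicit. Unset Printing Implicit Defensive.
Import Order.TTheory GRing.Theory Num.Theory.
Local Open Scope ring_scope.

(* ---------- Sofic groups ----------
   G (a possibly infinite group, MathComp's [groupType]) is sofic if for every
   finite F ⊆ G and every ε > 0 there are a nonempty finite set X = 'I_m and a
   map σ : G -> Sym(X) such that
     * for g, h ∈ F:  d_H(σ(gh), σ(g)σ(h)) ≤ ε   (normalized Hamming distance)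
     * for g ∈ F, g ≠ 1:  d_H(σ(g), id) ≥ 1 - ε, i.e. σ(g) fixes ≤ ε|X| points. *)
Definition sofic (G : groupType) : Prop :=
  forall (F : seq G) (eps : rat), 0 < eps ->
  exists (m : nat) (sigma : G -> {perm 'I_m}),
    (0 < m)%N /\
    (forall g h, g \in F -> h \in F ->
       (#|[set x : 'I_m | sigma (g * h)%g x != sigma g (sigma h x)]|%:R
          <= eps * m%:R)) /\
    (forall g, g \in F -> g != 1%g ->
       (#|[set x : 'I_m | sigma g x == x]|%:R <= eps * m%:R)).

(* ---------- Group ring D(G) ----------
   An element of D(G) is a finitely supported function G -> D; the product is
   convolution (a b)(g) = Σ_h a(h) b(h^{-1} g) (a finite sum). *)
Definition fin_supp (G : groupType) (D : nmodType) (f : G -> D) : Prop :=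
  exists s : seq G, forall g, f g != 0 -> g \in s.

Definition gr_conv (G : groupType) (D : pzSemiRingType) (a b : G -> D) : G -> D :=
  fun g => \sum_(h \in [set: G]%classic) a h * b (h^-1 * g)%g.

Definition gr_mxmul (G : groupType) (D : pzSemiRingType) (n : nat)
  (A B : 'I_n -> 'I_n -> G -> D) : 'I_n -> 'I_n -> G -> D :=
  fun i j g => \sum_(k < n) gr_conv (A i k) (B k j) g.

Definition gr_mx1 (G : groupType) (D : pzSemiRingType) (n : nat)
  : 'I_n -> 'I_n -> G -> D :=
  fun i j g => if (i == j) && (g == 1%g) then 1 else 0.

Definition gr_mx_fin (G : groupType) (D : nmodType) (n : nat)
  (A : 'I_n -> 'I_n -> G -> D) : Prop := forall i j, fin_supp (A i j).

(* If ab = 1 but ba <> 1 in Mat_n(D(G)), some coefficient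
   c = (ba - 1)_{i0 j0}(g0) is nonzero.  A sofic approximation sig : G -> Sym(m)
   sends y in D(G) to the m x m matrix sum_g y(g) sig(g), and is multiplicative
   at every "good" point, where sig is a local homomorphism that acts freely on
   the relevant finite set F of group elements; soficity makes all but
   eps * m points good.  So the images A, B of a, b satisfy AB = 1 up to a
   matrix of rank at most n * #bad, and over a division ring, by Gaussian
   elimination, the same then holds for BA, so the image of ba - 1 has rank
   O(n * #bad).  But it contains c times an identity minor indexed by a set of
   good points q whose images sig(g0) q avoid the sig-orbits of the others, and
   a greedy choice gives one of size at least #good / (2s + 1), with s the size
   of the support set.  Hence m = O(#bad) = O(eps m), absurd for small eps. *)

From HB Require Import structures.
From mathcomp Require Import all_boot all_order all_algebra all_fingroup.
From mathcomp Require Import boolp fsbigop zify.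
From mathcomp Require classical_sets unstable.
Set Implicit Arguments. Unset Strict Implicit. Unset Printing Implicit Defensive.
Import GRing.Theory Num.Theory.
Local Open Scope ring_scope.

Section FunMatrix.
Variable R : pzRingType.

(* Matrices are functions on arbitrary finite index types, so that deleting a
   row or adjoining a block needs no casts. *)

Definition fmx_mul (I J K : finType) (A : I -> J -> R) (B : J -> K -> R) : I -> K -> R :=
  fun i k => \sum_j A i j * B j k.

Definition fmx1 (I : finType) : I -> I -> R := fun i j => (i == j)%:R.

Definition fmx_defect (I J : finType) (A : I -> J -> R) (B : J -> I -> R) : I -> I -> R :=
  fun i i' => fmx1 i i' - fmx_mul A B i i'.

(* Lacking determinants over a noncommutative ring, rank is measured by
   factorizations: [rank_le M k] says that [M] factors through [k] coordinates. *)
Definition rank_le (I J : finType) (M : I -> J -> R) (k : nat) : Prop :=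
  exists (K : finType) (U : I -> K -> R) (V : K -> J -> R),
    (#|K| <= k)%N /\ M = fmx_mul U V.

Lemma sum_delta_l (I : finType) (i : I) (F : I -> R) : \sum_j (i == j)%:R * F j = F i.
Proof.
rewrite (bigD1 i) //= eqxx mul1r big1 ?addr0 // => j; rewrite eq_sym => /negbTE ->.
by rewrite mul0r.
Qed.

Lemma sum_delta_r (I : finType) (i : I) (F : I -> R) : \sum_j F j * (j == i)%:R = F i.
Proof.
rewrite (bigD1 i) //= eqxx mulr1 big1 ?addr0 // => j /negbTE ->.
by rewrite mulr0.
Qed.

Lemma fmx_mulA (I J K L : finType) (A : I -> J -> R) (B : J -> K -> R) (C : K -> L -> R) :
  fmx_mul (fmx_mul A B) C = fmx_mul A (fmx_mul B C).
Proof.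
apply: funext => i; apply: funext => l; rewrite /fmx_mul.
under eq_bigr do rewrite big_distrl /=.
rewrite exchange_big; apply: eq_bigr => j _; rewrite big_distrr /=.
by apply: eq_bigr => k _; rewrite mulrA.
Qed.

Lemma fmx_mul1l (I J : finType) (A : I -> J -> R) : fmx_mul (@fmx1 I) A = A.
Proof. by apply: funext => i; apply: funext => j; rewrite /fmx_mul sum_delta_l. Qed.

Lemma fmx_mul1r (I J : finType) (A : I -> J -> R) : fmx_mul A (@fmx1 J) = A.
Proof. by apply: funext => i; apply: funext => j; rewrite /fmx_mul sum_delta_r. Qed.

Lemma fmx_mulBl (I J K : finType) (A B : I -> J -> R) (C : J -> K -> R) :
  fmx_mul (fun i j => A i j - B i j) C = (fun i k => fmx_mul A C i k - fmx_mul B C i k).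
Proof.
apply: funext => i; apply: funext => k; rewrite /fmx_mul -sumrB.
by apply: eq_bigr => j _; rewrite mulrBl.
Qed.

Lemma fmx_mulBr (I J K : finType) (A : I -> J -> R) (B C : J -> K -> R) :
  fmx_mul A (fun j k => B j k - C j k) = (fun i k => fmx_mul A B i k - fmx_mul A C i k).
Proof.
apply: funext => i; apply: funext => k; rewrite /fmx_mul -sumrB.
by apply: eq_bigr => j _; rewrite mulrBr.
Qed.

Lemma fmx_defect_conj (I J : finType) (T T' : J -> J -> R) (Y : J -> I -> R) (X : I -> J -> R) :
  fmx_mul T T' = @fmx1 J ->
  fmx_mul T (fmx_mul (fmx_defect (fmx_mul T' Y) (fmx_mul X T)) T') = fmx_defect Y X.
Proof.
move=> hTT'; rewrite /fmx_defect fmx_mulBl fmx_mulBr fmx_mul1l hTT'.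
by rewrite !fmx_mulA -(fmx_mulA T T') hTT' fmx_mul1l fmx_mul1r.
Qed.

Lemma rank_le_mull (I J K : finType) (A : I -> J -> R) (M : J -> K -> R) k :
  rank_le M k -> rank_le (fmx_mul A M) k.
Proof. by case=> [L [U [V [hL ->]]]]; exists L, (fmx_mul A U), V; rewrite fmx_mulA. Qed.

Lemma rank_le_mulr (I J K : finType) (M : I -> J -> R) (A : J -> K -> R) k :
  rank_le M k -> rank_le (fmx_mul M A) k.
Proof. by case=> [L [U [V [hL ->]]]]; exists L, U, (fmx_mul V A); rewrite fmx_mulA. Qed.

Lemma rank_le_submx (I J I' J' : finType) (M : I -> J -> R) (f : I' -> I) (g : J' -> J) k :
  rank_le M k -> rank_le (fun i j => M (f i) (g j)) k.
Proof.
by case=> [L [U [V [hL ->]]]]; exists L, (fun i t => U (f i) t), (fun t j => V t (g j)).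
Qed.

Lemma rank_le_sub (I J : finType) (M N : I -> J -> R) k1 k2 :
  rank_le M k1 -> rank_le N k2 -> rank_le (fun i j => M i j - N i j) (k1 + k2).
Proof.
case=> [L1 [U1 [V1 [h1 ->]]]] [L2 [U2 [V2 [h2 ->]]]].
exists (L1 + L2)%type,
  (fun i t => match t with inl t1 => U1 i t1 | inr t2 => - U2 i t2 end),
  (fun t j => match t with inl t1 => V1 t1 j | inr t2 => V2 t2 j end).
split; first by rewrite card_sum leq_add.
apply: funext => i; apply: funext => j; rewrite /fmx_mul big_sumType /= -sumrN.
by congr (_ + _); apply: eq_bigr => t _; rewrite mulNr.
Qed.

Lemma rank_le_supp_cols (I J : finType) (M : I -> J -> R) (C : {set J}) :
  (forall i j, j \notin C -> M i j = 0) -> rank_le M #|C|.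
Proof.
move=> hC; exists {x | x \in C}%type, (fun i t => M i (val t)), (fun t j => fmx1 (val t) j).
split; first by rewrite card_sig.
apply: funext => i; apply: funext => j; rewrite /fmx_mul /fmx1.
rewrite -(big_sub C (fun x => M i x * (x == j)%:R)) /=.
have [jC|jC] := boolP (j \in C); last first.
  rewrite hC // big1 // => x xC; suff /negbTE -> : x != j by rewrite mulr0.
  by apply: contraNneq jC => <-.
rewrite (bigD1 j) //= eqxx mulr1 big1 ?addr0 // => x /andP[_ /negbTE ->].
by rewrite mulr0.
Qed.

Lemma fmx_mul_defect_r (I J : finType) (X : I -> J -> R) (Y : J -> I -> R) :
  fmx_mul X Y = @fmx1 I -> fmx_mul (fmx_defect Y X) Y = (fun _ _ => 0).
Proof.
move=> hXY; rewrite /fmx_defect fmx_mulBl fmx_mul1l fmx_mulA hXY fmx_mul1r.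
by apply: funext => j; apply: funext => i; rewrite subrr.
Qed.

Lemma big_predC1_sig (I : finType) (i0 : I) (F : I -> R) :
  \sum_i F i = F i0 + \sum_(t : {x in predC1 i0}) F (val t).
Proof. by rewrite (bigD1 i0) //= -(big_sub (predC1 i0) F). Qed.

Lemma sum_delta_sig_l (I : finType) (i0 : I) (t : {x in predC1 i0})
    (F : {x in predC1 i0} -> R) :
  \sum_(s : {x in predC1 i0}) (val t == val s)%:R * F s = F t.
Proof. by under eq_bigr do rewrite (inj_eq val_inj); rewrite sum_delta_l. Qed.

Lemma rank_le_deflate (J : finType) (j0 : J) (M : J -> J -> R)
    (c : {x in predC1 j0} -> R) k :
  (forall j, M j0 j = 0) ->
  (forall j, M j j0 = \sum_(t : {x in predC1 j0}) M j (val t) * c t) ->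
  rank_le (fun s t : {x in predC1 j0} => M (val s) (val t)) k -> rank_le M k.
Proof.
move=> hrow hcol hrk.
set M' := fun s t : {x in predC1 j0} => _ in hrk.
pose E : J -> {x in predC1 j0} -> R := fun j t => (j == val t)%:R.
pose V : {x in predC1 j0} -> J -> R := fun t j => if j == j0 then c t else (val t == j)%:R.
have hEM : fmx_mul E M' = (fun j t => M j (val t)).
  apply: funext => j; apply: funext => t; rewrite /fmx_mul /E.
  have [->|hj] := eqVneq j j0.
    rewrite hrow big1 // => s _.
    by rewrite eq_sym (negbTE (valP s)) mul0r.
  exact: (sum_delta_sig_l (Sub j hj : {x in predC1 j0})).
have -> : M = fmx_mul (fmx_mul E M') V.
  apply: funext => j; apply: funext => j'; rewrite hEM /fmx_mul /V.
  have [->|hj'] := eqVneq j' j0; first by rewrite hcol.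
  rewrite -[M j j'](sum_delta_r (Sub j' hj' : {x in predC1 j0}) (fun t => M j (val t))).
  by apply: eq_bigr => t _; rewrite -(inj_eq val_inj).
by apply: rank_le_mulr; apply: rank_le_mull.
Qed.

Section RankOneUpdate.
Variables (J : finType) (j0 : J).

Definition rank_one_update (c : J -> R) : J -> J -> R :=
  fun j j' => fmx1 j j' + (j == j0)%:R * c j'.

Lemma rank_one_update_mul (c d : J -> R) :
  fmx_mul (rank_one_update c) (rank_one_update d) =
  rank_one_update (fun j => c j + d j + c j0 * d j).
Proof.
apply: funext => j; apply: funext => j''; rewrite /fmx_mul /rank_one_update /fmx1.
under eq_bigr do rewrite mulrDl !mulrDr -!mulrA (mulrA (c _)).
rewrite !big_split /= !sum_delta_l -!big_distrr /= -big_distrl /= !sum_delta_r.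
by rewrite !mulrDr !addrA; congr (_ + _); rewrite -!addrA (addrC (_ * d j'')).
Qed.

End RankOneUpdate.

End FunMatrix.

Lemma exists_normalizing_update (D : unitRingType) (J : finType) (x : J -> D) (j0 : J) :
  x j0 \is a GRing.unit ->
  exists T T' : J -> J -> D,
    fmx_mul T T' = @fmx1 D J /\ forall j, \sum_k x k * T k j = (j0 == j)%:R.
Proof.
move=> hp; pose c j := (x j0)^-1 * ((j0 == j)%:R - x j).
exists (rank_one_update j0 c), (rank_one_update j0 (fun j => x j - (j0 == j)%:R)).
split.
  rewrite rank_one_update_mul /c eqxx mulrBr mulr1 mulVr //.
  apply: funext => j; apply: funext => j'; rewrite /rank_one_update.
  by rewrite -[x j' - _]opprB mulrN mulrBl mul1r opprB subrr mulr0 addr0.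
move=> j; rewrite /rank_one_update /fmx1.
under eq_bigr do rewrite mulrDr.
rewrite big_split /= sum_delta_r (bigD1 j0) //= big1 ?addr0; last first.
  by move=> k /negbTE ->; rewrite mul0r mulr0.
by rewrite eqxx mul1r /c mulVKr // addrC subrK.
Qed.

Section RightInverseDeflation.
Variables (R : pzRingType) (I J : finType) (X : I -> J -> R) (Y : J -> I -> R).
Variables (i0 : I) (j0 : J).
Hypotheses (hXY : fmx_mul X Y = @fmx1 R I) (hX0 : forall j, X i0 j = (j0 == j)%:R).

Local Notation I' := {x in predC1 i0}.
Local Notation J' := {x in predC1 j0}.
Let X' : I' -> J' -> R := fun i j => X (val i) (val j).
Let Y' : J' -> I' -> R := fun j i => Y (val j) (val i).

Lemma right_inverse_pivot_row i : Y j0 i = (i0 == i)%:R.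
Proof.
have := congr1 (fun M => M i0 i) hXY; rewrite /fmx_mul /fmx1 /= => <-.
by under eq_bigr do rewrite hX0; rewrite sum_delta_l.
Qed.

Lemma right_inverse_deflate_mul : fmx_mul X' Y' = @fmx1 R I'.
Proof.
apply: funext => i; apply: funext => i'.
have := congr1 (fun M => M (val i) (val i')) hXY.
rewrite /fmx_mul /fmx1 /= (big_predC1_sig j0) right_inverse_pivot_row.
by rewrite eq_sym (negbTE (valP i')) mulr0 add0r (inj_eq val_inj).
Qed.

Lemma rank_le_right_inverse_deflate k :
  rank_le (fmx_defect Y' X') k -> rank_le (fmx_defect Y X) k.
Proof.
move=> hrk; apply: (@rank_le_deflate _ _ j0 _ (fun t => - Y (val t) i0)).
- move=> j; rewrite /fmx_defect /fmx_mul.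
  under eq_bigr do rewrite right_inverse_pivot_row.
  by rewrite sum_delta_l hX0 subrr.
- move=> j; have := congr1 (fun M => M j i0) (fmx_mul_defect_r hXY).
  rewrite /fmx_mul /= (big_predC1_sig j0) right_inverse_pivot_row eqxx mulr1.
  move/eqP; rewrite addr_eq0 => /eqP ->; rewrite -sumrN.
  by apply: eq_bigr => t _; rewrite mulrN.
- congr (rank_le _ k): hrk; apply: funext => s; apply: funext => t.
  rewrite /fmx_defect /fmx_mul /fmx1 (inj_eq val_inj) (big_predC1_sig i0) hX0.
  by rewrite (eq_sym j0) (negbTE (valP t)) mulr0 add0r.
Qed.

End RightInverseDeflation.

Lemma card_sig_predC1 (I : finType) (i0 : I) : #|{: {x in predC1 i0}}| = #|I|.-1.
Proof. by rewrite card_sig -(cardC1 i0); apply: eq_card. Qed.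

Section DivisionRing.
Variable D : unitRingType.
Hypothesis unitfD : forall x : D, x != 0 -> x \is a GRing.unit.

(* Gaussian elimination: column operations turn row [i0] of [X] into a unit
   vector [e_j0]; then row [i0] and column [j0] can be deleted. *)
Lemma right_inverse_rank (I J : finType) (X : I -> J -> D) (Y : J -> I -> D) :
  fmx_mul X Y = @fmx1 D I ->
  (#|I| <= #|J|)%N /\ rank_le (fmx_defect Y X) (#|J| - #|I|).
Proof.
move: {2}#|I| (erefl #|I|) => s; elim: s I J X Y => [|s IH] I J X Y hs hXY.
  split; first by rewrite hs.
  exists J, (@fmx1 D J), (@fmx1 D J); split; first by rewrite hs subn0.
  rewrite fmx_mul1l; apply: funext => j; apply: funext => j'.
  rewrite /fmx_defect /fmx_mul big1 ?subr0 // => i _.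
  by have := card0_eq hs i; rewrite !inE.
have [i0 _] : exists i0 : I, i0 \in I by apply/card_gt0P; rewrite hs.
have [j0 hj0] : exists j0, X i0 j0 != 0.
  apply/existsP; apply: contraT; rewrite negb_exists => /forallP hX0.
  have := congr1 (fun M => M i0 i0) hXY; rewrite /fmx_mul /fmx1 /= eqxx big1.
    by move/eqP; rewrite eq_sym oner_eq0.
  by move=> j _; move: (hX0 j); rewrite negbK => /eqP ->; rewrite mul0r.
have [T [T' [hTT' hX0]]] := exists_normalizing_update (unitfD hj0).
have hXY' : fmx_mul (fmx_mul X T) (fmx_mul T' Y) = @fmx1 D I.
  by rewrite fmx_mulA -(fmx_mulA T) hTT' fmx_mul1l.
have hcI : #|{: {x in predC1 i0}}| = s by rewrite card_sig_predC1 hs.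
have [hcard hrk] := IH _ _ _ _ hcI (right_inverse_deflate_mul hXY' hX0).
have hJ : (0 < #|J|)%N by apply/card_gt0P; exists j0.
move: hcard hrk; rewrite hcI card_sig_predC1 => hcard hrk.
split; first by lia.
rewrite -(fmx_defect_conj _ _ hTT'); apply: rank_le_mull; apply: rank_le_mulr.
by apply: (rank_le_right_inverse_deflate hXY' hX0); congr (rank_le _ _): hrk; lia.
Qed.

(* If [1 - AB = UV], then [[A | U]] has the right inverse [[B ; V]]. *)
Lemma rank_le_defect_mulC (I : finType) (A B : I -> I -> D) k :
  rank_le (fmx_defect A B) k -> rank_le (fmx_defect B A) k.
Proof.
case=> [K [U [V [hK hUV]]]].
pose A' : I -> (I + K)%type -> D :=
  fun i v => match v with inl i' => A i i' | inr t => U i t end.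
pose B' : (I + K)%type -> I -> D :=
  fun v i => match v with inl i' => B i' i | inr t => V t i end.
have hAB' : fmx_mul A' B' = @fmx1 D I.
  apply: funext => i; apply: funext => i'; rewrite /fmx_mul big_sumType /=.
  by rewrite -/(fmx_mul U V i i') -hUV /fmx_defect addrC subrK.
have [_ hrk] := right_inverse_rank hAB'.
have := rank_le_submx (@inl I K) (@inl I K) hrk.
rewrite card_sum addKn => hrk'; case: hrk' => [L [U' [V' [hL hUV']]]].
by exists L, U', V'; split; [exact: leq_trans hK | rewrite -hUV'].
Qed.

Lemma card_le_rank_scalar_minor (I X Y : finType) (M : X -> Y -> D) k
    (rho : I -> X) (kappa : I -> Y) (w : D) :
  w != 0 -> rank_le M k ->
  (forall l l', M (rho l) (kappa l') = w * (l == l')%:R) -> (#|I| <= k)%N.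
Proof.
move=> /unitfD hw [K [U [V [hK hM]]]] hMw.
pose X' : I -> K -> D := fun l t => w^-1 * U (rho l) t.
pose Y' : K -> I -> D := fun t l' => V t (kappa l').
have hXY' : fmx_mul X' Y' = @fmx1 D I.
  apply: funext => l; apply: funext => l'; rewrite /fmx_mul /X' /Y'.
  under eq_bigr do rewrite -mulrA.
  by rewrite -big_distrr /= -/(fmx_mul U V _ _) -hM hMw mulKr.
by have [hc _] := right_inverse_rank hXY'; exact: leq_trans hc hK.
Qed.

End DivisionRing.

Lemma fsbig_setT_seq (T : choiceType) (V : nmodType) (r : seq T) (F : T -> V) :
  uniq r -> (forall g, F g != 0 -> g \in r) ->
  \sum_(g \in @classical_sets.setT T) F g = \sum_(g <- r) F g.
Proof.
move=> ur hr; rewrite (fsbig_seq _ _ ur); apply/esym/fsbig_widen => // x [_ /= xr].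
by apply/eqP; apply: contraT => /hr.
Qed.

Section SoficRepresentation.
Variables (G : groupType) (D : pzRingType) (n m : nat) (sig : G -> {perm 'I_m}).
Variables (L L2 F : seq G).
Hypotheses (uniq_L2 : uniq L2) (L_sub_L2 : {subset L <= L2}) (L2_sub_F : {subset L2 <= F}).
Hypothesis mul_L_L2 : forall h h', h \in L -> h' \in L -> (h * h')%g \in L2.
Hypothesis one_L2 : 1%g \in L2.
Hypothesis divl_L2_F : forall h g, h \in L2 -> g \in L2 -> (h^-1 * g)%g \in F.

Definition good_point (q : 'I_m) : bool :=
  all (fun g => all (fun h => sig (g * h)%g q == sig g (sig h q)) F) F &&
  all (fun g => (g == 1%g) || (sig g q != q)) F.

Lemma good_point_mul q g h :
  good_point q -> g \in F -> h \in F -> sig (g * h)%g q = sig g (sig h q).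
Proof. by case/andP => /allP h1 _ /h1 /allP h2 /h2 /eqP. Qed.

Lemma good_point_fix q g : good_point q -> g \in F -> g != 1%g -> sig g q != q.
Proof. by case/andP => _ /allP h1 /h1; case: (g == 1%g). Qed.

Lemma good_point_one q : good_point q -> sig 1%g q = q.
Proof.
move=> hq; have := good_point_mul hq (L2_sub_F one_L2) (L2_sub_F one_L2).
by rewrite mul1g => /perm_inj.
Qed.

Lemma good_point_orbit_inj q g h :
  good_point q -> g \in L2 -> h \in L2 -> sig g q = sig h q -> g = h.
Proof.
move=> hq hg hh e; apply/eqP; apply: contraT => hne.
have hu1 : (h^-1 * g)%g != 1%g by rewrite -(inj_eq (mulgI h)) mulKVg mulg1.
have := good_point_fix hq (divl_L2_F hh hg) hu1; apply: contraNT => _.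
apply/eqP; apply: (@perm_inj _ (sig h)).
by rewrite -(good_point_mul hq (L2_sub_F hh) (divl_L2_F hh hg)) mulKVg.
Qed.

Definition sofic_rep (y : G -> D) (p q : 'I_m) : D :=
  \sum_(g <- L2) y g * (p == sig g q)%:R.

Definition sofic_mx_rep (A : 'I_n -> 'I_n -> G -> D) (u v : 'I_n * 'I_m) : D :=
  sofic_rep (A u.1 v.1) u.2 v.2.

Lemma sofic_rep_sum (I : finType) (Y : I -> G -> D) p q :
  sofic_rep (fun g => \sum_k Y k g) p q = \sum_k sofic_rep (Y k) p q.
Proof.
rewrite /sofic_rep; under eq_bigr do rewrite big_distrl /=.
by rewrite exchange_big.
Qed.

Lemma sum_L2_translate (y f : G -> D) h :
  h \in L -> (forall g, y g != 0 -> g \in L) ->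
  \sum_(g <- L2) y g * f (h * g)%g = \sum_(g <- L2) y (h^-1 * g)%g * f g.
Proof.
move=> hL hy.
rewrite -(@fsbig_setT_seq _ _ L2 (fun g => y g * f (h * g)%g)) //; last first.
  move=> g; apply: contraR => hg; rewrite (_ : y g = 0) ?mul0r //.
  by apply/eqP; apply: contraR hg => /hy /L_sub_L2.
rewrite -(@fsbig_setT_seq _ _ L2 (fun g => y (h^-1 * g)%g * f g)) //; last first.
  move=> g; apply: contraR => hg; rewrite (_ : y _ = 0) ?mul0r //.
  apply/eqP; apply: contraR hg => /hy hy'.
  by rewrite -(mulVKg h g); apply: mul_L_L2.
rewrite [RHS](reindex_fsbigT (fun g => (h * g)%g)) /=; last first.
  by exists (fun g => (h^-1 * g)%g) => g; rewrite ?mulKg ?mulVKg.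
by apply: eq_fsbigr => g _ /=; rewrite mulKg.
Qed.

Lemma sofic_rep_conv (x y : G -> D) p q :
  (forall g, x g != 0 -> g \in L) -> (forall g, y g != 0 -> g \in L) -> good_point q ->
  \sum_r sofic_rep x p r * sofic_rep y r q = sofic_rep (gr_conv x y) p q.
Proof.
move=> hx hy hq.
have conv_L2 g : gr_conv x y g = \sum_(h <- L2) x h * y (h^-1 * g)%g.
  rewrite /gr_conv; apply: fsbig_setT_seq => // h; apply: contraR => hh.
  by rewrite (_ : x h = 0) ?mul0r //; apply/eqP; apply: contraR hh => /hx /L_sub_L2.
have -> : \sum_r sofic_rep x p r * sofic_rep y r q =
          \sum_(h <- L2) x h * \sum_(h' <- L2) y h' * (p == sig h (sig h' q))%:R.
  rewrite /sofic_rep; under eq_bigr do rewrite big_distrr /=.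
  rewrite exchange_big /=.
  rewrite (eq_bigr (fun h' => \sum_(h <- L2) x h * (p == sig h (sig h' q))%:R * y h')).
    rewrite exchange_big /=; apply: eq_bigr => h _; rewrite big_distrr /=.
    by apply: eq_bigr => h' _; rewrite -!mulrA commr_nat.
  move=> h' _; under eq_bigr do rewrite commr_nat mulrA.
  by rewrite -big_distrl /= sum_delta_r big_distrl.
have -> : sofic_rep (gr_conv x y) p q =
          \sum_(h <- L2) x h * \sum_(g <- L2) y (h^-1 * g)%g * (p == sig g q)%:R.
  rewrite /sofic_rep; under eq_bigr do rewrite conv_L2 big_distrl /=.
  rewrite exchange_big /=; apply: eq_bigr => h _; rewrite big_distrr /=.
  by apply: eq_bigr => g _; rewrite !mulrA.
apply: eq_big_seq => h hh; have [->|/hx hL] := eqVneq (x h) 0; first by rewrite !mul0r.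
rewrite -(sum_L2_translate (fun g => (p == sig g q)%:R)) //; congr (_ * _).
by apply: eq_big_seq => h' hh'; rewrite good_point_mul ?L2_sub_F.
Qed.

Lemma sofic_mx_rep_mul (A B : 'I_n -> 'I_n -> G -> D) u v :
  (forall i j g, A i j g != 0 -> g \in L) -> (forall i j g, B i j g != 0 -> g \in L) ->
  good_point v.2 ->
  fmx_mul (sofic_mx_rep A) (sofic_mx_rep B) u v = sofic_mx_rep (gr_mxmul A B) u v.
Proof.
move=> hA hB hv; rewrite /fmx_mul /sofic_mx_rep.
rewrite -(pair_bigA _ (fun k r => sofic_rep (A u.1 k) u.2 r * sofic_rep (B k v.1) r v.2)) /=.
under eq_bigr => k _ do rewrite (sofic_rep_conv u.2 (hA u.1 k) (hB k v.1) hv).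
by rewrite -sofic_rep_sum.
Qed.

Lemma sofic_mx_rep1 u v : good_point v.2 -> sofic_mx_rep (@gr_mx1 G D n) u v = fmx1 D u v.
Proof.
move=> hv; rewrite /sofic_mx_rep /sofic_rep /gr_mx1 (bigD1_seq 1%g) //= big1_seq; last first.
  by move=> g /andP[/negbTE -> _]; rewrite andbF mul0r.
rewrite addr0 eqxx andbT good_point_one // /fmx1; case: u v hv => [i p] [j q] /= hv.
by rewrite xpair_eqE; case: (i == j); rewrite ?mul1r ?mul0r.
Qed.

Lemma sofic_rep_diag (y : G -> D) g q :
  (forall g, y g != 0 -> g \in L2) -> g \in L2 -> good_point q -> sofic_rep y (sig g q) q = y g.
Proof.
move=> hy hg hq; rewrite /sofic_rep (bigD1_seq g) //= eqxx mulr1 big1_seq ?addr0 //.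
move=> h /andP[hne hh]; rewrite (_ : _ == _ = false) ?mulr0 //.
by apply: contraNF hne => /eqP /(good_point_orbit_inj hq hg hh) ->.
Qed.

Lemma sofic_rep_offdiag (y : G -> D) g q q' :
  (forall h, h \in L2 -> sig g q != sig h q') -> sofic_rep y (sig g q) q' = 0.
Proof.
move=> h; rewrite /sofic_rep big1_seq // => h' /andP[_ hh'].
by rewrite (negbTE (h h' hh')) mulr0.
Qed.

End SoficRepresentation.

Lemma sum_seq_mul_le (I : eqType) (r : seq I) (f : I -> nat) T M :
  (forall i, i \in r -> f i * T <= M)%N -> ((\sum_(i <- r) f i) * T <= size r * M)%N.
Proof.
elim: r => [|j r IH] h; first by rewrite big_nil.
rewrite big_cons /= mulnDl mulSn; apply: leq_add; first by apply: h; rewrite inE eqxx.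
by apply: IH => i ir; apply: h; rewrite inE ir orbT.
Qed.

Lemma card_bigcup_seq_mul_le (I : eqType) (T : finType) (r : seq I) (A : I -> {set T}) k M :
  (forall i, i \in r -> #|A i| * k <= M)%N -> (#|\bigcup_(i <- r) A i| * k <= size r * M)%N.
Proof.
move=> hA; apply: leq_trans (sum_seq_mul_le hA).
by rewrite leq_mul2r (unstable.card_big_setU r xpredT) orbT.
Qed.

Lemma card_bad_points (G : groupType) m (sig : G -> {perm 'I_m}) (F : seq G) k :
  (forall g h, g \in F -> h \in F ->
     #|[set x | sig (g * h)%g x != sig g (sig h x)]| * k <= m)%N ->
  (forall g, g \in F -> g != 1%g -> #|[set x | sig g x == x]| * k <= m)%N ->
  (#|[set q | ~~ good_point sig F q]| * k <= (size F * size F + size F) * m)%N.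
Proof.
move=> hmul hfix.
pose Bmul := \bigcup_(g <- F) \bigcup_(h <- F) [set x | sig (g * h)%g x != sig g (sig h x)].
pose Bfix := \bigcup_(g <- F) if g == 1%g then set0 else [set x | sig g x == x].
have hsub : [set q | ~~ good_point sig F q] \subset Bmul :|: Bfix.
  apply/subsetP => q; rewrite !inE negb_and => /orP[/allPn [g hg] | /allPn [g hg]].
    move=> /allPn [h hh hn].
    by rewrite /Bmul (big_rem g hg) (big_rem h hh) !inE hn.
  rewrite negb_or negbK => /andP[/negbTE hg1 hgq].
  by rewrite /Bfix (big_rem g hg) hg1 !inE hgq orbT.
have cmul : (#|Bmul| * k <= size F * (size F * m))%N.
  apply: card_bigcup_seq_mul_le => g hg.
  by apply: card_bigcup_seq_mul_le => h hh; apply: hmul.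
have cfix : (#|Bfix| * k <= size F * m)%N.
  apply: card_bigcup_seq_mul_le => g hg.
  by case: eqVneq => [_|hg1]; [rewrite cards0 | apply: hfix].
apply: leq_trans (leq_mul (subset_leq_card hsub) (leqnn k)) _.
apply: leq_trans (leq_mul (leq_card_setU Bmul Bfix) (leqnn k)) _.
by rewrite mulnDl mulnDl -mulnA; apply: leq_add.
Qed.

Lemma greedy_independent_subset (T : finType) (N : T -> {set T}) d (A : {set T}) :
  (forall x, #|N x| <= d)%N -> (forall x y, (y \in N x) = (x \in N y)) ->
  exists Q : {set T}, [/\ Q \subset A,
    {in Q &, forall x y, x != y -> y \notin N x} & (#|A| <= d.+1 * #|Q|)%N].
Proof.
move=> hN hsym; have [k] := ubnP #|A|; elim: k A => // k IH A hA.
have [->|[x xA]] := set_0Vmem A.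
  by exists set0; split; rewrite ?sub0set ?cards0 // => u; rewrite inE.
pose A' := A :\: (x |: N x).
have hA' : (#|A'| < k)%N.
  have hs : A' \subset A :\ x.
    by apply/subsetP => y; rewrite !inE negb_or => /andP[/andP[-> _] ->].
  by have := subset_leq_card hs; have := cardsD1 x A; rewrite xA; lia.
have [Q' [sQ' iQ' cQ']] := IH A' hA'.
have xQ' : x \notin Q' by apply/negP => /(subsetP sQ'); rewrite !inE eqxx.
exists (x |: Q'); split.
- by rewrite subUset sub1set xA (subset_trans sQ') ?subsetDl.
- move=> u v; rewrite !inE => /orP[/eqP -> | uQ] /orP[/eqP -> | vQ]; rewrite ?eqxx //.
  + by move=> _; move/subsetP: sQ' => /(_ v vQ); rewrite !inE negb_or => /andP[/andP[]].
  + by move=> _; move/subsetP: sQ' => /(_ u uQ); rewrite !inE negb_or hsym => /andP[/andP[]].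
  + exact: iQ'.
- rewrite cardsU1 xQ' -(cardsID (x |: N x) A).
  have : (#|A :&: (x |: N x)| <= d.+1)%N.
    apply: leq_trans (subset_leq_card (subsetIr _ _)) _.
    by rewrite cardsU1; have := hN x; case: (x \in N x); lia.
  by move: cQ'; rewrite -/A'; lia.
Qed.

Lemma fin_supp_family (G : groupType) (D : nmodType) (I : finType) (f : I -> G -> D) :
  (forall i, fin_supp (f i)) -> exists s : seq G, forall i g, f i g != 0 -> g \in s.
Proof.
move=> /choice [s hs]; exists (flatten [seq s i | i <- enum I]) => i g /hs hg.
by apply/flattenP; exists (s i); rewrite ?map_f ?mem_enum.
Qed.

Lemma gr_mx_fin_common_supp (G : groupType) (D : nmodType) n
    (a b : 'I_n -> 'I_n -> G -> D) :
  gr_mx_fin a -> gr_mx_fin b -> exists L : seq G,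
    [/\ 1%g \in L, forall i j g, a i j g != 0 -> g \in L
      & forall i j g, b i j g != 0 -> g \in L].
Proof.
move=> ha hb.
have [sa hsa] := fin_supp_family (fun ij : 'I_n * 'I_n => ha ij.1 ij.2).
have [sb hsb] := fin_supp_family (fun ij : 'I_n * 'I_n => hb ij.1 ij.2).
exists (1%g :: sa ++ sb); split => [|i j g /(hsa (i, j))|i j g /(hsb (i, j))];
  by rewrite !inE ?mem_cat ?eqxx // => ->; rewrite ?orbT.
Qed.

Lemma gr_conv_supp (G : groupType) (D : pzSemiRingType) (L L2 : seq G) (x y : G -> D) g :
  (forall h h', h \in L -> h' \in L -> (h * h')%g \in L2) ->
  (forall g, x g != 0 -> g \in L) -> (forall g, y g != 0 -> g \in L) ->
  gr_conv x y g != 0 -> g \in L2.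
Proof.
move=> hm hx hy; apply: contraR => hg; apply/eqP; apply: fsbig1 => h _.
have [->|/hx hL] := eqVneq (x h) 0; first by rewrite mul0r.
have [->|/hy hL'] := eqVneq (y (h^-1 * g)%g) 0; first by rewrite mulr0.
by have := hm _ _ hL hL'; rewrite mulKVg (negbTE hg).
Qed.

Lemma gr_mxmul_supp (G : groupType) (D : pzSemiRingType) n (L L2 : seq G)
    (A B : 'I_n -> 'I_n -> G -> D) i j g :
  (forall h h', h \in L -> h' \in L -> (h * h')%g \in L2) ->
  (forall i j g, A i j g != 0 -> g \in L) -> (forall i j g, B i j g != 0 -> g \in L) ->
  gr_mxmul A B i j g != 0 -> g \in L2.
Proof.
move=> hm hA hB; apply: contraR => hg; apply/eqP; apply: big1 => k _.
by apply/eqP; apply: contraNT hg; apply: gr_conv_supp hm (hA i k) (hB k j).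
Qed.

Definition prodseq (G : groupType) (s t : seq G) : seq G :=
  undup [seq (h * h')%g | h <- s, h' <- t].

Lemma mem_prodseq (G : groupType) (s t : seq G) h h' :
  h \in s -> h' \in t -> (h * h')%g \in prodseq s t.
Proof. by move=> hs ht; rewrite mem_undup; apply: allpairs_f. Qed.

Section SoficStablyFinite.
Variables (G : groupType) (D : unitRingType) (n : nat).
Hypothesis unitfD : forall x : D, x != 0 -> x \is a GRing.unit.
Variables (a b : 'I_n -> 'I_n -> G -> D) (L : seq G).
Hypotheses (one_L : 1%g \in L) (supp_a : forall i j g, a i j g != 0 -> g \in L).
Hypothesis supp_b : forall i j g, b i j g != 0 -> g \in L.
Hypothesis mul_ab : gr_mxmul a b = @gr_mx1 G D n.

Local Notation L2 := (prodseq L L).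
Local Notation F := (L2 ++ prodseq [seq h^-1 | h <- L2] L2)%g.

Let uniq_L2 : uniq L2. Proof. exact: undup_uniq. Qed.
Let mul_L_L2 h h' : h \in L -> h' \in L -> (h * h')%g \in L2. Proof. exact: mem_prodseq. Qed.
Let L_sub_L2 : {subset L <= L2}. Proof. by move=> h hh; rewrite -[h]mul1g mul_L_L2. Qed.
Let one_L2 : 1%g \in L2. Proof. exact: L_sub_L2. Qed.
Let L2_sub_F : {subset L2 <= F}. Proof. by move=> h hh; rewrite mem_cat hh. Qed.
Let divl_L2_F h g : h \in L2 -> g \in L2 -> (h^-1 * g)%g \in F.
Proof. by move=> hh hg; rewrite mem_cat (mem_prodseq (map_f _ hh) hg) orbT. Qed.

Section Approximation.
Variables (m : nat) (sig : G -> {perm 'I_m}).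

Local Notation good := (good_point sig F).
Local Notation rep := (@sofic_mx_rep G D n m sig L2).
Local Notation bad_cols := [set v : 'I_n * 'I_m | ~~ good v.2].

Lemma rank_le_rep_defect :
  rank_le (fun u v => rep (gr_mxmul b a) u v - rep (@gr_mx1 G D n) u v)
          (#|bad_cols| + #|bad_cols|).
Proof.
have rep_mul := sofic_mx_rep_mul uniq_L2 L_sub_L2 L2_sub_F mul_L_L2.
have rep1 := sofic_mx_rep1 D uniq_L2 L2_sub_F one_L2.
have hab : rank_le (fmx_defect (rep a) (rep b)) #|bad_cols|.
  apply: rank_le_supp_cols => u v; rewrite inE negbK => hv.
  by rewrite /fmx_defect rep_mul // mul_ab rep1 ?subrr.
have hba := rank_le_defect_mulC unitfD hab.
have hrest : rank_le (fun u v => rep (gr_mxmul b a) u v - rep (@gr_mx1 G D n) u v +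
    fmx_defect (rep b) (rep a) u v) #|bad_cols|.
  apply: rank_le_supp_cols => u v; rewrite inE negbK => hv.
  by rewrite /fmx_defect rep_mul // rep1 // addrA subrK subrr.
congr (rank_le _ _): (rank_le_sub hrest hba).
by apply: funext => u; apply: funext => v; rewrite addrK.
Qed.

Lemma exists_separated_subset (g0 : G) (A : {set 'I_m}) :
  exists Q : {set 'I_m}, [/\ Q \subset A,
    {in Q &, forall q q', q != q' -> forall g, g \in L2 -> sig g0 q != sig g q'}
    & (#|A| <= (2 * size L2).+1 * #|Q|)%N].
Proof.
pose N q := [set q' | has (fun g => (sig g0 q == sig g q') || (sig g0 q' == sig g q)) L2].
have card_N q : (#|N q| <= 2 * size L2)%N.
  pose S := [seq (sig g)^-1%g (sig g0 q) | g <- L2] ++ [seq (sig g0)^-1%g (sig g q) | g <- L2].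
  have sub : N q \subset [set x in S].
    apply/subsetP => q'; rewrite !inE mem_cat => /hasP [g hg /orP[/eqP e | /eqP e]].
      by apply/orP; left; apply/mapP; exists g; rewrite // e permK.
    by apply/orP; right; apply/mapP; exists g; rewrite // -e permK.
  apply: leq_trans (subset_leq_card sub) _; rewrite cardsE.
  by apply: leq_trans (card_size _) _; rewrite size_cat !size_map addnn mul2n.
have N_sym q q' : (q' \in N q) = (q \in N q').
  by rewrite !inE; apply: eq_has => g; rewrite orbC.
have [Q [sQ iQ cQ]] := greedy_independent_subset A card_N N_sym.
exists Q; split=> // q q' hq hq' hne g hg.
by move: (iQ q q' hq hq' hne); rewrite inE => /hasPn /(_ g hg); rewrite negb_or => /andP[].
Qed.

(* The entries [((i0, sig g0 q), (j0, q))], [q] in [Q], form a scalar minor of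
   the image of [ba - 1], with scalar its nonzero coefficient at [(i0, j0, g0)]. *)
Lemma card_separated_le_bad (i0 j0 : 'I_n) (g0 : G) (Q : {set 'I_m}) :
  gr_mxmul b a i0 j0 g0 != gr_mx1 D i0 j0 g0 ->
  {in Q, forall q, good q} ->
  {in Q &, forall q q', q != q' -> forall g, g \in L2 -> sig g0 q != sig g q'} ->
  (#|Q| <= #|bad_cols| + #|bad_cols|)%N.
Proof.
rewrite -subr_eq0 => hc goodQ sepQ.
have supp_ba i j g : gr_mxmul b a i j g != 0 -> g \in L2.
  exact: gr_mxmul_supp mul_L_L2 supp_b supp_a.
have supp_1 i j g : @gr_mx1 G D n i j g != 0 -> g \in L2.
  by rewrite /gr_mx1; case: ifP => [/andP[_ /eqP ->] _ //|_]; rewrite eqxx.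
have g0_L2 : g0 \in L2.
  have [h|/supp_ba //] := eqVneq (gr_mxmul b a i0 j0 g0) 0.
  by move: hc; rewrite h sub0r oppr_eq0 => /supp_1.
have rep_diag := @sofic_rep_diag G D m sig L2 F uniq_L2 L2_sub_F divl_L2_F.
rewrite -card_sig; apply: (card_le_rank_scalar_minor unitfD hc rank_le_rep_defect
  (rho := fun q => (i0, sig g0 (val q))) (kappa := fun q => (j0, val q))) => q q'.
rewrite /sofic_mx_rep /=; have [<-|hqq'] := eqVneq q q'.
  have good_q := goodQ _ (valP q).
  rewrite mulr1 (rep_diag _ _ _ (supp_ba i0 j0) g0_L2 good_q).
  by rewrite (rep_diag _ _ _ (supp_1 i0 j0) g0_L2 good_q).
have hsep g : g \in L2 -> sig g0 (val q) != sig g (val q').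
  by apply: (sepQ _ _ (valP q) (valP q')); rewrite (inj_eq val_inj).
by rewrite mulr0 !sofic_rep_offdiag ?subrr.
Qed.

Lemma many_bad_points (i0 j0 : 'I_n) (g0 : G) :
  gr_mxmul b a i0 j0 g0 != gr_mx1 D i0 j0 g0 ->
  (m <= #|[set q | ~~ good q]| * (2 * n * (2 * size L2).+1).+1)%N.
Proof.
move=> hne; have [Q [sQ sepQ cQ]] := exists_separated_subset g0 [set q | good q].
have goodQ : {in Q, forall q, good q} by move=> q /(subsetP sQ); rewrite inE.
have hQ := card_separated_le_bad hne goodQ sepQ.
have card_cols : #|bad_cols| = (n * #|[set q | ~~ good q]|)%N.
  have -> : bad_cols = setX [set: 'I_n] [set q | ~~ good q].
    by apply/setP => -[i q]; rewrite !inE.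
  by rewrite cardsX cardsT card_ord.
have := cardsC [set q | good q]; rewrite card_ord.
rewrite (_ : ~: _ = [set q | ~~ good q]); last by apply/setP => q; rewrite !inE.
have := leq_mul (leqnn (2 * size L2).+1) hQ.
move: cQ; rewrite card_cols.
move: #|Q| #|[set q | good q]| #|[set q | ~~ good q]| (size L2) => x y z w.
nia.
Qed.

End Approximation.
End SoficStablyFinite.

Theorem mainTheorem2 (G : groupType) (D : unitRingType)
  (hD : forall x : D, x != 0 -> x \is a GRing.unit)
  (hG : sofic G) (n : nat) (hn : (1 <= n)%N)
  (a b : 'I_n -> 'I_n -> G -> D)
  (ha : gr_mx_fin a) (hb : gr_mx_fin b) :
  gr_mxmul a b = @gr_mx1 G D n -> gr_mxmul b a = @gr_mx1 G D n.
Proof.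
move=> hab; apply: funext => i0; apply: funext => j0; apply: funext => g0.
apply/eqP; apply: contraT => hne.
have [L [one_L supp_a supp_b]] := gr_mx_fin_common_supp ha hb.
pose L2 := prodseq L L; pose F := (L2 ++ prodseq [seq h^-1 | h <- L2] L2)%g.
pose P := (size F * size F + size F)%N; pose c := (2 * n * (2 * size L2).+1).+1.
(* With [eps = 1/k], at most [P m / k] points are bad, whereas
   [many_bad_points] needs at least [m / c] of them. *)
pose k := (P * c).+1.
have eps_gt0 : (0 : rat) < k%:R^-1 by rewrite invr_gt0 ltr0n.
have [m [sig [m_gt0 [hmul hfix]]]] := hG F _ eps_gt0.
have nat_bound x : (x%:R <= k%:R^-1 * m%:R :> rat) -> (x * k <= m)%N.
  by rewrite ler_pdivlMl ?ltr0n // -natrM ler_nat mulnC.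
have hbad := card_bad_points (fun g h hg hh => nat_bound _ (hmul g h hg hh))
                             (fun g hg hg1 => nat_bound _ (hfix g hg hg1)).
have hmany := many_bad_points hD one_L supp_a supp_b hab sig hne.
have := leq_mul hmany (leqnn k); have := leq_mul hbad (leqnn c).
by move: m_gt0; rewrite -/L2 -/F -/P -/c /k; nia.
Qed.
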